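(* Let $T_r$ be a resistive dyadic tree with resistances $r=(r_n^k)_{n\ge 1,\,0\le k\le 2^n-1}$ (notation in the context), and assume $$\sum_{n\geq 1} \frac{1}{2^n}\max_{0\le k\le 2^n-1} r_n^k < +\infty .$$ Then for every $p\in H^1(T_r)$ the sequence $(\tilde p_n)_{n\ge 0}$ converges strongly in $L^2(\mathbb{Z}_2)$ to some $\tilde p\in L^2(\mathbb{Z}_2)$, and the linear operator $\gamma_0: p\mapsto \tilde p$ is a bounded linear operator from $H^1(T_r)$ to $L^2(\mathbb{Z}_2)$.
   Context: The infinite dyadic tree $T$ has vertex set $V$ equal to the disjoint union over $n\ge 0$ of the sets $\mathbb{Z}/2^n\mathbb{Z}$; $x_n^k$ denotes $k\in\mathbb{Z}/2^n\mathbb{Z}$ ($0\le k\le 2^n-1$), the $k$-th vertex of generation $n$, and $x_0^0$ is the root. For $n<m$, $\varphi_n^m:\mathbb{Z}/2^m\mathbb{Z}\to\mathbb{Z}/2^n\mathbb{Z}$ is the canonical surjection. For $n\ge1$, the edge $e_n^k$ joins $x_n^k$ to its parent $\varphi_{n-1}^n(x_n^k)$, and these are all the edges. A resistive dyadic tree $T_r$ is $T$ together with positive numbers $r_n^k$ ($n\ge1$, $0\le k\le 2^n-1$), $r_n^k$ being the resistance of $e_n^k$. For $p:V\to\mathbb{R}$ set $$|p|_{H^1}^2=\sum_{n\ge1}\sum_{k=0}^{2^n-1}\frac{|p(x_n^k)-p(\varphi_{n-1}^n(x_n^k))|^2}{r_n^k},$$ and $H^1(T_r)=\{p:V\to\mathbb{R}: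 |p|_{H^1}<\infty\}$, normed by $\|p\|_{H^1(T_r)}^2=|p(x_0^0)|^2+|p|_{H^1}^2$. $\mathbb{Z}_2$ is the ring of 2-adic integers with 2-adic absolute value $|\cdot|_2$ and Haar probability measure $\mu$ (so $\mu(a+2^n\mathbb{Z}_2)=2^{-n}$); $L^2(\mathbb{Z}_2)$ is taken with respect to $\mu$. For $p:V\to\mathbb{R}$ and $n\ge0$, $\tilde p_n:\mathbb{Z}_2\to\mathbb{R}$ is defined by $\tilde p_n(x)=p(x_n^a)$, where $a\in\{0,\dots,2^n-1\}$ is the unique integer with $x\in a+2^n\mathbb{Z}_2$. *)

From HB Require Import structures.
From mathcomp Require Import all_boot all_order all_algebra.
From mathcomp Require Import all_classical all_reals all_analysis.
Set Implicit Arguments. Unset Strict Implicit. Unset Printing Implicit Defensive.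
Import Order.TTheory GRing.Theory Num.Theory.
Local Open Scope classical_set_scope.
Local Open Scope ring_scope.

(* 2-adic integers represented by their digit sequences:
   x = \sum_i x_i 2^i  <->  (x_i)_i : nat -> bool. *)
Definition Z2digits := nat -> bool.

(* a_n(x) = the unique a in {0,..,2^n-1} with x \in a + 2^n Z_2 *)
Definition trunc2 (n : nat) (x : Z2digits) : nat :=
  (\sum_(i < n) (x i : nat) * 2 ^ i)%N.

Definition coset2 (n a : nat) : set Z2digits := [set x | trunc2 n x = a].

(* the generating family of cosets; the sigma-algebra they generate is the
   Borel sigma-algebra of Z_2 *)
Definition cosets2 : set (set Z2digits) :=
  [set A | exists n a, A = coset2 n a].

Definition Z2 := g_sigma_algebraType cosets2.

(* a function p : V -> R is encoded as p n k = p(x_n^k) for k < 2^n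
   (values for k >= 2^n are irrelevant and never used) *)
Definition vfun (R : Type) := nat -> nat -> R.

(* parent of x_n^k (n >= 1) is x_{n-1}^{k mod 2^{n-1}} *)
Definition H1term (R : realType) (r : vfun R) (p : vfun R) (n : nat) : R :=
  \sum_(k < 2 ^ n) (p n k - p n.-1 (k %% 2 ^ n.-1)%N) ^+ 2 / r n k.

Definition H1semi2 (R : realType) (r p : vfun R) : \bar R :=
  (\sum_(1 <= n <oo) (H1term r p n)%:E)%E.

Definition inH1 (R : realType) (r p : vfun R) : Prop := (H1semi2 r p < +oo)%E.

Definition H1norm2 (R : realType) (r p : vfun R) : R :=
  p 0%N 0%N ^+ 2 + fine (H1semi2 r p).

Definition ptilde (R : Type) (p : vfun R) (n : nat) : Z2 -> R :=
  fun x => p n (trunc2 n x).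

Definition L2limit (R : realType) (mu : {measure set Z2 -> \bar R})
    (p : vfun R) (f : Z2 -> R) : Prop :=
  measurable_fun setT f /\
  mu.-integrable setT (fun x => (f x ^+ 2)%:E) /\
  ((fun n => (\int[mu]_x ((ptilde p n x - f x) ^+ 2)%:E)%E) @ \oo --> 0%E).

(* Let a_n = 2^-n max_k r_n^k ([weight n]), T_n = sum_(k > n) a_k ([tail n]) and
   S(x) = sum_(n >= 1) (p_n(x) - p_(n-1)(x))^2 / a_n ([energy p x]), where p_n is
   \tilde p_n.  Averaging over the 2^n cosets of level n bounds the integral of S by
   |p|_(H^1)^2, because 2^-n / a_n <= 1 / r_n^k.  For m >= n, Cauchy-Schwarz gives
   (p_m(x) - p_n(x))^2 <= T_n S(x), and T_n -> 0 by the summability hypothesis.  So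
   p_n(x) converges wherever S(x) is finite, the limit p satisfies
   (p_n - p)^2 <= T_n S, and integrating gives L^2 convergence.  The same estimate
   started at level 0 gives p_n^2 <= (1 + T_0) (p(x_0^0)^2 + S), whence
   ||p||_(L^2)^2 <= 2 (1 + T_0) ||p||_(H^1)^2. *)

From mathcomp Require Import all_boot all_order all_algebra.
From mathcomp Require Import all_classical all_reals all_analysis.
From mathcomp Require Import measurable_realfun.
From mathcomp Require Import zify ring lra.
Set Implicit Arguments. Unset Strict Implicit. Unset Printing Implicit Defensive.
Import Order.TTheory GRing.Theory Num.Theory.
Import numFieldNormedType.Exports.
Local Open Scope classical_set_scope.
Local Open Scope ring_scope.

Lemma trunc2S n x : trunc2 n.+1 x = (trunc2 n x + x n * 2 ^ n)%N.
Proof. by rewrite /trunc2 big_ord_recr. Qed.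

Lemma trunc2_0 x : trunc2 0 x = 0%N.
Proof. by rewrite /trunc2 big_ord0. Qed.

Lemma trunc2_lt n x : (trunc2 n x < 2 ^ n)%N.
Proof.
elim: n => [|n IH]; first by rewrite trunc2_0.
by rewrite trunc2S expnS; case: (x n) => /=; lia.
Qed.

Lemma trunc2_pred n x : trunc2 n.-1 x = (trunc2 n x %% 2 ^ n.-1)%N.
Proof.
case: n => [|n] /=; first by rewrite trunc2_0 mod0n.
by rewrite trunc2S addnC modnMDl modn_small // trunc2_lt.
Qed.

Lemma measurable_coset2 n a : measurable (coset2 n a : set Z2).
Proof. by apply: sub_sigma_algebra; exists n, a. Qed.

Lemma measurable_trunc2 d (T : measurableType d) (h : nat -> T) n :
  measurable_fun setT (fun x : Z2 => h (trunc2 n x)).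
Proof.
move=> _ Y mY; rewrite setTI.
have -> : (fun x => h (trunc2 n x)) @^-1` Y =
    \bigcup_j (if pselect (Y (h j)) is left _ then coset2 n j else set0).
  apply/seteqP; split => [x Yx|x [j _]]; first by exists (trunc2 n x) => //; case: pselect.
  by case: pselect => // Yj; rewrite /coset2 /= => ->.
by apply: bigcupT_measurable => j; case: pselect => _ //; exact: measurable_coset2.
Qed.

Lemma measurable_ptilde (R : realType) (p : vfun R) n : measurable_fun setT (ptilde p n).
Proof. exact: measurable_trunc2. Qed.

Lemma ptilde_0 (R : Type) (p : vfun R) x : ptilde p 0 x = p 0%N 0%N.
Proof. by rewrite /ptilde trunc2_0. Qed.

(* The limsup is measurable by construction, and it is the limit wherever the
   [ptilde p m x] converge. *)
Definition ptilde_lim (R : realType) (p : vfun R) (x : Z2) : R :=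
  fine (limn_esup (fun m => (ptilde p m x)%:E)).

Lemma measurable_ptilde_lim (R : realType) (p : vfun R) :
  measurable_fun setT (ptilde_lim p).
Proof.
rewrite /ptilde_lim; apply: measurableT_comp => //.
apply: (measurable_fun_limn_esup (f := fun m x => (ptilde p m x)%:E)) => m.
exact: (measurable_trunc2 (fun j => (p m j)%:E)).
Qed.

Lemma ptilde_lim_cvg (R : realType) (p : vfun R) x :
  cvgn (fun m => ptilde p m x) -> (fun m => ptilde p m x) @ \oo --> ptilde_lim p x.
Proof.
move=> /cvg_ex[l pl]; have pEl : (fun m => (ptilde p m x)%:E) @ \oo --> l%:E.
  exact: cvg_comp pl _.
rewrite /ptilde_lim is_cvg_limn_esupE; last by apply/cvg_ex; exists l%:E.
by rewrite (cvg_lim _ pEl).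
Qed.

(* One step of the Cauchy-Schwarz inequality (sum_k d_k)^2 <= (sum_k w_k) (sum_k d_k^2 / w_k). *)
Lemma sqrrD_le_weighted (R : realFieldType) (X S Q d w : R) :
  X ^+ 2 <= S * Q -> 0 <= S -> 0 <= Q -> 0 < w ->
  (X + d) ^+ 2 <= (S + w) * (Q + d ^+ 2 / w).
Proof.
move=> XSQ S0 Q0 w0.
have [e ->] : exists e, d = e * w by exists (d / w); rewrite divfK // gt_eqF.
have -> : (e * w) ^+ 2 / w = e ^+ 2 * w by field; rewrite gt_eqF.
suff : 0 <= S * e ^+ 2 - 2 * X * e + Q by nra.
have [S_eq0|S_neq0] := eqVneq S 0.
  by rewrite S_eq0 mul0r in XSQ *; nra.
have S_gt0 : 0 < S by rewrite lt_def S_neq0.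
rewrite -(pmulr_rge0 _ S_gt0).
have -> : S * (S * e ^+ 2 - 2 * X * e + Q) = (S * e - X) ^+ 2 + (S * Q - X ^+ 2) by ring.
by rewrite addr_ge0 ?sqr_ge0 ?subr_ge0.
Qed.

Lemma normr_le_amgm (R : realFieldType) (d w : R) : 0 < w ->
  `|d| <= (w + d ^+ 2 / w) / 2.
Proof.
move=> w0.
have [e ->] : exists e, d = e * w by exists (d / w); rewrite divfK // gt_eqF.
have -> : (e * w) ^+ 2 / w = `|e| ^+ 2 * w by rewrite real_normK ?num_real //; field; rewrite gt_eqF.
rewrite normrM (gtr0_norm w0) -subr_ge0.
have -> : (w + `|e| ^+ 2 * w) / 2 - `|e| * w = (1 - `|e|) ^+ 2 * w / 2 by field.
by rewrite divr_ge0 // mulr_ge0 ?sqr_ge0 ?ltW.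
Qed.

Lemma sqrrD_le2 (R : realFieldType) (x y : R) : (x + y) ^+ 2 <= 2 * x ^+ 2 + 2 * y ^+ 2.
Proof.
rewrite -subr_ge0.
have -> : 2 * x ^+ 2 + 2 * y ^+ 2 - (x + y) ^+ 2 = (x - y) ^+ 2 by ring.
exact: sqr_ge0.
Qed.

Lemma measurable_EFin_sqr (R : realType) (g : Z2 -> R) : measurable_fun setT g ->
  measurable_fun setT (fun x => (g x ^+ 2)%:E).
Proof. by move=> mg; apply/measurable_EFinP; exact: measurable_funX. Qed.

Section IntegralsOnZ2.
Context {R : realType} {mu : probability Z2 R}.

Lemma integral_cst_probability (c : R) : (\int[mu]_x c%:E = c%:E)%E.
Proof.
have -> := integral_cst mu measurableT c%:E.
by rewrite -[RHS]mule1; congr (_ * _)%E; exact: probability_setT.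
Qed.

Lemma integral_sqr_lincomb_le (g h : Z2 -> R) a b :
  measurable_fun setT g -> measurable_fun setT h ->
  (\int[mu]_x ((a * g x + b * h x) ^+ 2)%:E <=
    (2 * a ^+ 2)%:E * \int[mu]_x (g x ^+ 2)%:E +
    (2 * b ^+ 2)%:E * \int[mu]_x (h x ^+ 2)%:E)%E.
Proof.
move=> mg mh.
have c_ge0 (c : R) : 0 <= 2 * c ^+ 2 by rewrite mulr_ge0 ?sqr_ge0.
have mZ (c : R) (f : Z2 -> R) : measurable_fun setT f ->
    measurable_fun setT (fun x => (2 * c ^+ 2)%:E * (f x ^+ 2)%:E)%E.
  by move=> mf; apply: measurable_funeM; exact: measurable_EFin_sqr.
apply: (@le_trans _ _ (\int[mu]_x
    ((2 * a ^+ 2)%:E * (g x ^+ 2)%:E + (2 * b ^+ 2)%:E * (h x ^+ 2)%:E))%E).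
  apply: ge0_le_integral => //.
  - by move=> x _; rewrite lee_fin sqr_ge0.
  - apply: measurable_EFin_sqr.
    by apply: measurable_funD; apply: measurable_funM => //; exact: measurable_cst.
  - by apply: emeasurable_funD; exact: mZ.
  move=> x _; rewrite -!EFinM -EFinD lee_fin.
  by have := sqrrD_le2 (a * g x) (b * h x); rewrite !exprMn !mulrA.
rewrite ge0_integralD //; last 4 first.
- by move=> x _; rewrite mule_ge0 ?lee_fin ?sqr_ge0.
- exact: mZ.
- by move=> x _; rewrite mule_ge0 ?lee_fin ?sqr_ge0.
- exact: mZ.
rewrite ge0_integralZl_EFin //; last 2 first.
- by move=> x _; rewrite lee_fin sqr_ge0.
- exact: measurable_EFin_sqr.
rewrite ge0_integralZl_EFin //; last 2 first.
- by move=> x _; rewrite lee_fin sqr_ge0.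
- exact: measurable_EFin_sqr.
Qed.

Lemma integral_sqr_le_split (g h : Z2 -> R) :
  measurable_fun setT g -> measurable_fun setT h ->
  (\int[mu]_x (g x ^+ 2)%:E <=
    2%:E * \int[mu]_x ((h x - g x) ^+ 2)%:E + 2%:E * \int[mu]_x (h x ^+ 2)%:E)%E.
Proof.
move=> mg mh.
have := integral_sqr_lincomb_le (-1) 1 (measurable_funB mh mg) mh.
rewrite sqrrN !expr1n mulr1.
by under eq_integral => x _ do rewrite mulN1r mul1r opprB subrK.
Qed.

Lemma fin_num_integral_sqr (g : Z2 -> R) :
  mu.-integrable setT (fun x => (g x ^+ 2)%:E) ->
  (\int[mu]_x (g x ^+ 2)%:E)%E \is a fin_num.
Proof.
move=> /integrableP[_]; under eq_integral => x _ do rewrite gee0_abs ?lee_fin ?sqr_ge0 //.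
by move=> h; rewrite ge0_fin_numE // integral_ge0 // => x _; rewrite lee_fin sqr_ge0.
Qed.

Lemma L2limit_lincomb (p q : vfun R) (fp fq : Z2 -> R) a b :
  L2limit mu p fp -> L2limit mu q fq ->
  L2limit mu (fun n k => a * p n k + b * q n k) (fun x => a * fp x + b * fq x).
Proof.
move=> [mp [ip cp]] [mq [iq cq]].
have mc : measurable_fun setT (fun x => a * fp x + b * fq x).
  by apply: measurable_funD; apply: measurable_funM => //; exact: measurable_cst.
split=> //; split.
  apply/integrableP; split; first exact: measurable_EFin_sqr.
  under eq_integral => x _ do rewrite gee0_abs ?lee_fin ?sqr_ge0 //.
  apply: le_lt_trans (integral_sqr_lincomb_le a b mp mq) _.
  by rewrite ltey_eq fin_numD !fin_numM // ?fin_num_integral_sqr.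
apply: (@squeeze_cvge _ _ _ _ (cst 0%E) _ (fun n =>
   (2 * a ^+ 2)%:E * \int[mu]_x ((ptilde p n x - fp x) ^+ 2)%:E +
   (2 * b ^+ 2)%:E * \int[mu]_x ((ptilde q n x - fq x) ^+ 2)%:E)%E).
- near=> n; rewrite integral_ge0 /=; last by move=> x _; rewrite lee_fin sqr_ge0.
  have -> : (fun x => ((ptilde (fun n k => a * p n k + b * q n k) n x -
                         (a * fp x + b * fq x)) ^+ 2)%:E) =
            (fun x => ((a * (ptilde p n x - fp x) + b * (ptilde q n x - fq x)) ^+ 2)%:E).
    by apply/funext => x; congr (_%:E); rewrite /ptilde; ring.
  exact: (integral_sqr_lincomb_le a b (measurable_funB (measurable_ptilde p n) mp)
                                 (measurable_funB (measurable_ptilde q n) mq)).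
- exact: cvg_cst.
- have -> : 0%E = ((2 * a ^+ 2)%:E * 0 + (2 * b ^+ 2)%:E * 0)%E by rewrite !mule0 adde0.
  apply: cvgeD; first by rewrite !mule0.
    by apply: cvgeM; [exact: mule_def_fin | exact: cvg_cst | exact: cp].
  by apply: cvgeM; [exact: mule_def_fin | exact: cvg_cst | exact: cq].
Unshelve. all: by end_near.
Qed.

Hypothesis mu_coset2 :
  forall n a : nat, (a < 2 ^ n)%N -> mu (coset2 n a) = ((2%:R ^- n : R)%:E).

Lemma integral_trunc2 (h : nat -> R) n : (forall j, 0 <= h j) ->
  (\int[mu]_x (h (trunc2 n x))%:E = (\sum_(j < 2 ^ n) h j * 2%:R ^- n)%:E)%E.
Proof.
move=> h0.
have -> : (fun x => (h (trunc2 n x))%:E) =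
    (fun x => \sum_(j < 2 ^ n) (h j)%:E * (\1_(coset2 n j) x)%:E)%E.
  apply/funext => x; rewrite (bigD1 (Ordinal (trunc2_lt n x))) //= big1.
    by rewrite indicE mem_set // mule1 adde0.
  move=> j /eqP nj; rewrite indicE memNset ?mule0 // /coset2 /= => ej.
  by apply: nj; apply: val_inj.
have m_indic (j : nat) : measurable_fun setT (fun x : Z2 => (\1_(coset2 n j) x : R)%:E).
  by apply/measurable_EFinP; exact: measurable_indic (measurable_coset2 n j).
rewrite ge0_integral_sum //; last 2 first.
- by move=> j; exact: measurable_funeM.
- by move=> j x _; rewrite mule_ge0 ?lee_fin.
rewrite -sumEFin; apply: eq_bigr => j _.
rewrite ge0_integralZl_EFin // (integral_indic _ measurableT (measurable_coset2 n j)).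
have -> : coset2 n j `&` setT = coset2 n j by apply/seteqP; split => x //= [].
by move: (@mu_coset2 n j (ltn_ord j)) => /= ->; rewrite EFinM.
Qed.

End IntegralsOnZ2.

Section Trace.
Context {R : realType} {mu : probability Z2 R}.
Hypothesis mu_coset2 :
  forall n a : nat, (a < 2 ^ n)%N -> mu (coset2 n a) = ((2%:R ^- n : R)%:E).
Context {r : vfun R}.
Hypothesis r_gt0 : forall n k : nat, (1 <= n)%N -> (k < 2 ^ n)%N -> 0 < r n k.
Hypothesis weights_summable : (\sum_(1 <= n <oo)
  ((2%:R ^- n * \big[Num.max/0]_(k < 2 ^ n) r n k)%:E) < +oo)%E.

Definition rmax n := \big[Num.max/0]_(k < 2 ^ n) r n k.
Definition weight n : R := 2%:R ^- n * rmax n.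

Lemma rmax_ge0 n : 0 <= rmax n.
Proof. exact: bigmax_ge_id. Qed.

Lemma r_le_rmax n k : (k < 2 ^ n)%N -> r n k <= rmax n.
Proof. by move=> kn; exact: (le_bigmax _ (fun i : 'I_(2 ^ n) => r n i) (Ordinal kn)). Qed.

Lemma rmax_gt0 n : (1 <= n)%N -> 0 < rmax n.
Proof.
move=> n_ge1; have n2 : (0 < 2 ^ n)%N by rewrite expn_gt0.
exact: lt_le_trans (r_gt0 n_ge1 n2) (r_le_rmax n2).
Qed.

Lemma weight_ge0 n : 0 <= weight n.
Proof. by rewrite mulr_ge0 ?invr_ge0 ?exprn_ge0 ?rmax_ge0. Qed.

Lemma weight_gt0 n : (1 <= n)%N -> 0 < weight n.
Proof. by move=> n_ge1; rewrite mulr_gt0 ?invr_gt0 ?exprn_gt0 ?rmax_gt0. Qed.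

Definition wincr (p : vfun R) n j := (p n j - p n.-1 (j %% 2 ^ n.-1)%N) ^+ 2 / weight n.

Lemma wincr_ge0 p n j : 0 <= wincr p n j.
Proof. by rewrite divr_ge0 ?sqr_ge0 ?weight_ge0. Qed.

Lemma wincr_trunc2 p n x :
  wincr p n (trunc2 n x) = (ptilde p n x - ptilde p n.-1 x) ^+ 2 / weight n.
Proof. by rewrite /wincr /ptilde trunc2_pred. Qed.

Definition energy (p : vfun R) (x : Z2) : \bar R :=
  \sum_(n <oo) (wincr p n.+1 (trunc2 n.+1 x))%:E.

Lemma energy_ge0 p x : (0 <= energy p x)%E.
Proof. by apply: nneseries_ge0 => n _ _; rewrite lee_fin wincr_ge0. Qed.

Lemma measurable_energy p : measurable_fun setT (energy p).
Proof.
apply: ge0_emeasurable_sum => [n x _ _|n _]; first by rewrite lee_fin wincr_ge0.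
exact: (measurable_trunc2 (fun j => (wincr p n.+1 j)%:E)).
Qed.

Lemma H1term_ge0 p n : 0 <= H1term r p n.
Proof.
case: n => [|n]; first by rewrite /H1term big_ord1 /= modn1 subrr expr0n mul0r.
by apply: sumr_ge0 => j _; rewrite divr_ge0 ?sqr_ge0 // ltW // r_gt0.
Qed.

Lemma H1semi2_ge0 p : (0 <= H1semi2 r p)%E.
Proof. by apply: nneseries_ge0 => n _ _; rewrite lee_fin H1term_ge0. Qed.

Lemma fin_num_H1semi2 p : inH1 r p -> H1semi2 r p \is a fin_num.
Proof. by move=> hp; rewrite ge0_fin_numE ?H1semi2_ge0. Qed.

Lemma integral_wincr_le p n : (1 <= n)%N ->
  (\int[mu]_x (wincr p n (trunc2 n x))%:E <= (H1term r p n)%:E)%E.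
Proof.
move=> n_ge1; rewrite (integral_trunc2 mu_coset2); last exact: wincr_ge0.
rewrite lee_fin; apply: ler_sum => j _; rewrite /wincr.
set d := (_ - _) ^+ 2.
have -> : d / weight n * 2%:R ^- n = d / rmax n.
  by rewrite /weight; field; rewrite expf_neq0 ?pnatr_eq0 //= gt_eqF ?rmax_gt0.
by rewrite ler_wpM2l ?sqr_ge0 // lef_pV2 ?posrE ?r_le_rmax ?rmax_gt0 ?r_gt0.
Qed.

Lemma integral_energy_le p : (\int[mu]_x energy p x <= H1semi2 r p)%E.
Proof.
rewrite integral_nneseries //; last 2 first.
- by move=> n; exact: (measurable_trunc2 (fun j => (wincr p n.+1 j)%:E)).
- by move=> n x _; rewrite lee_fin wincr_ge0.
rewrite /H1semi2 -nneseries_addn; last by move=> n; rewrite lee_fin H1term_ge0.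
apply: lee_nneseries => [n _ _|n _].
  by apply: integral_ge0 => x _; rewrite lee_fin wincr_ge0.
by rewrite addn1; exact: integral_wincr_le.
Qed.

Definition tail n : \bar R := \sum_(n <= k <oo) (weight k.+1)%:E.

Lemma tail_ge0 n : (0 <= tail n)%E.
Proof. by apply: nneseries_ge0 => k _ _; rewrite lee_fin weight_ge0. Qed.

Lemma tail_le_tail0 n : (tail n <= tail 0)%E.
Proof.
rewrite /tail (nneseries_split 0 n) ?add0n; last by move=> k _; rewrite lee_fin weight_ge0.
by rewrite leeDr // sume_ge0 // => k _; rewrite lee_fin weight_ge0.
Qed.

Lemma tail0_lty : (tail 0 < +oo)%E.
Proof.
have -> : tail 0 = (\sum_(1 <= k <oo) (weight k)%:E)%E.
  rewrite -nneseries_addn; last by move=> k; rewrite lee_fin weight_ge0.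
  by apply: eq_eseriesr => k _; rewrite addn1.
exact: weights_summable.
Qed.

Lemma fin_num_tail n : tail n \is a fin_num.
Proof. by rewrite ge0_fin_numE ?tail_ge0 // (le_lt_trans (tail_le_tail0 n) tail0_lty). Qed.

Lemma tail_gt0 n : (0 < tail n)%E.
Proof.
apply: lt_le_trans (nneseries_lim_ge n.+1 _); last by move=> k _ _; rewrite lee_fin weight_ge0.
by rewrite big_nat1 lte_fin weight_gt0.
Qed.

Lemma tail_cvg0 : (tail n @[n --> \oo] --> 0)%E.
Proof.
apply: nneseries_tail_cvg => [|k _]; last by rewrite lee_fin weight_ge0.
exact: tail0_lty.
Qed.

Lemma weight_psum_le_tail n m : ((\sum_(n <= k < m) weight k.+1)%:E <= tail n)%E.
Proof.
by rewrite -sumEFin; apply: nneseries_lim_ge => k _ _; rewrite lee_fin weight_ge0.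
Qed.

Lemma wincr_psum_le_energy p n m x :
  ((\sum_(n <= k < m) wincr p k.+1 (trunc2 k.+1 x))%:E <= energy p x)%E.
Proof.
have [nm|mn] := leqP n m; last by rewrite big_geq ?energy_ge0 // ltnW.
rewrite -sumEFin (le_trans _ (nneseries_lim_ge m _)) //; last first.
  by move=> k _ _; rewrite lee_fin wincr_ge0.
rewrite [X in (_ <= X)%E](@big_cat_nat _ _ _ n 0 m) /= ?leeDr //.
by rewrite sume_ge0 // => k _; rewrite lee_fin wincr_ge0.
Qed.

Lemma sqr_ptilde_sub_le_psums p n i x :
  (ptilde p (n + i) x - ptilde p n x) ^+ 2 <=
  (\sum_(n <= k < n + i) weight k.+1) *
  \sum_(n <= k < n + i) wincr p k.+1 (trunc2 k.+1 x).
Proof.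
elim: i => [|i IH]; first by rewrite addn0 subrr expr0n big_geq ?mul0r.
rewrite addnS !big_nat_recr ?leq_addr //= wincr_trunc2 /=.
have -> : ptilde p (n + i).+1 x - ptilde p n x =
    (ptilde p (n + i) x - ptilde p n x) + (ptilde p (n + i).+1 x - ptilde p (n + i) x).
  by ring.
apply: sqrrD_le_weighted => //; last exact: weight_gt0.
- by apply: sumr_ge0 => k _; exact: weight_ge0.
- by apply: sumr_ge0 => k _; exact: wincr_ge0.
Qed.

Lemma sqr_ptilde_sub_le p n m x : (n <= m)%N ->
  (((ptilde p m x - ptilde p n x) ^+ 2)%:E <= tail n * energy p x)%E.
Proof.
move=> nm; rewrite -(subnKC nm).
apply: le_trans (lee_pmul _ _ (weight_psum_le_tail n (n + (m - n)))
                              (wincr_psum_le_energy p n (n + (m - n)) x)).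
- by rewrite -EFinM lee_fin sqr_ptilde_sub_le_psums.
- by rewrite lee_fin sumr_ge0 // => k _; exact: weight_ge0.
- by rewrite lee_fin sumr_ge0 // => k _; exact: wincr_ge0.
Qed.

Lemma sqr_ptilde_le p m x :
  (((ptilde p m x) ^+ 2)%:E <= (1 + tail 0) * ((p 0%N 0%N ^+ 2)%:E + energy p x))%E.
Proof.
set W := \sum_(0 <= k < m) weight k.+1.
set Q := \sum_(0 <= k < m) wincr p k.+1 (trunc2 k.+1 x).
have W_ge0 : 0 <= W by rewrite sumr_ge0 // => k _; exact: weight_ge0.
have Q_ge0 : 0 <= Q by rewrite sumr_ge0 // => k _; exact: wincr_ge0.
have := sqrrD_le_weighted (p 0%N 0%N) (sqr_ptilde_sub_le_psums p 0 m x) W_ge0 Q_ge0 ltr01.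
rewrite add0n ptilde_0 subrK divr1 => ptilde_le.
apply: le_trans (_ : ((1 + W)%:E * ((p 0%N 0%N ^+ 2)%:E + Q%:E) <= _)%E).
  by rewrite -EFinD -EFinM lee_fin addrC [_ + Q]addrC.
apply: lee_pmul; rewrite ?lee_fin ?addr_ge0 ?sqr_ge0 //.
  by rewrite EFinD leeD2l // weight_psum_le_tail.
by rewrite leeD2l // wincr_psum_le_energy.
Qed.

(* Absolute convergence of the increments, since |d| <= (a_k + d^2 / a_k) / 2. *)
Lemma ptilde_cvg p x : (energy p x < +oo)%E -> cvgn (fun m => ptilde p m x).
Proof.
move=> energy_lty.
pose d k := ptilde p k.+1 x - ptilde p k x.
have : cvgn [normed series d].
  apply: nondecreasing_is_cvgn.
    by apply: nondecreasing_series => n _ _; exact: normr_ge0.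
  exists ((fine (tail 0) + fine (energy p x)) / 2) => _ [m _ <-] /=.
  apply: (@le_trans _ _ ((\sum_(0 <= k < m) weight k.+1 +
                          \sum_(0 <= k < m) wincr p k.+1 (trunc2 k.+1 x)) / 2)).
    rewrite seriesEord -big_split /= big_mkord mulr_suml.
    by apply: ler_sum => k _; rewrite wincr_trunc2 normr_le_amgm ?weight_gt0.
  rewrite ler_pM2r // lerD //.
    by rewrite -lee_fin fineK ?fin_num_tail ?weight_psum_le_tail.
  by rewrite -lee_fin fineK ?ge0_fin_numE ?energy_ge0 ?wincr_psum_le_energy.
move=> /normed_cvg cvg_d.
have -> : (fun m => ptilde p m x) = (fun m => p 0%N 0%N + series d m).
  by apply/funext => m; rewrite /series /= telescope_sumr // ptilde_0 addrC subrK.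
exact: is_cvgD (is_cvg_cst _) cvg_d.
Qed.

Lemma sqr_ptilde_sub_lim_le p n x :
  (((ptilde p n x - ptilde_lim p x) ^+ 2)%:E <= tail n * energy p x)%E.
Proof.
have [energy_lty|] := ltP (energy p x) +oo%E; last first.
  by rewrite leye_eq => /eqP ->; rewrite gt0_muley ?leey // tail_gt0.
have energy_fin : energy p x \is a fin_num by rewrite ge0_fin_numE ?energy_ge0.
rewrite -(fineK (fin_num_tail n)) -(fineK energy_fin) -EFinM lee_fin.
have cvg_sqr : (fun m => (ptilde p n x - ptilde p m x) ^+ 2) @ \oo -->
               (ptilde p n x - ptilde_lim p x) ^+ 2.
  have cvg_ptilde := ptilde_lim_cvg (ptilde_cvg energy_lty).
  rewrite expr2; under eq_fun => m do rewrite expr2.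
  by apply: cvgM; apply: cvgB => //; exact: cvg_cst.
rewrite -(cvg_lim _ cvg_sqr) //; apply: limr_le; first by apply/cvg_ex; eexists; exact: cvg_sqr.
near=> m; rewrite -sqrrN opprB.
have nm : (n <= m)%N by near: m; exists n.
have := sqr_ptilde_sub_le p x nm.
by rewrite -{1}(fineK (fin_num_tail n)) -{1}(fineK energy_fin) -EFinM lee_fin.
Unshelve. all: by end_near.
Qed.

Lemma integral_sqr_ptilde_sub_lim_le p n :
  (\int[mu]_x ((ptilde p n x - ptilde_lim p x) ^+ 2)%:E <= tail n * H1semi2 r p)%E.
Proof.
apply: (@le_trans _ _ (\int[mu]_x (tail n * energy p x))%E).
  apply: ge0_le_integral => //.
  - by move=> x _; rewrite lee_fin sqr_ge0.
  - apply: measurable_EFin_sqr.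
    exact: measurable_funB (measurable_ptilde p n) (measurable_ptilde_lim p).
  - exact: measurable_funeM (measurable_energy p).
  - by move=> x _; exact: sqr_ptilde_sub_lim_le.
rewrite ge0_integralZl ?tail_ge0 //; last 2 first.
- exact: measurable_energy.
- by move=> x _; exact: energy_ge0.
by rewrite lee_wpmul2l ?tail_ge0 ?integral_energy_le.
Qed.

Lemma ptilde_L2_cvg p : inH1 r p ->
  ((fun n => \int[mu]_x ((ptilde p n x - ptilde_lim p x) ^+ 2)%:E) @ \oo --> 0%E)%E.
Proof.
move=> hp.
apply: (@squeeze_cvge _ _ _ _ (cst 0%E) _ (fun n => tail n * H1semi2 r p)%E).
- near=> n; rewrite integral_sqr_ptilde_sub_lim_le andbT.
  by apply: integral_ge0 => x _; rewrite lee_fin sqr_ge0.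
- exact: cvg_cst.
rewrite -(mul0e (H1semi2 r p)).
apply: cvgeM; [by rewrite mule_def_fin ?fin_num_H1semi2 | exact: tail_cvg0 | exact: cvg_cst].
Unshelve. all: by end_near.
Qed.

Lemma integral_sqr_ptilde_le p m : (\int[mu]_x (ptilde p m x ^+ 2)%:E <=
   (1 + tail 0) * ((p 0%N 0%N ^+ 2)%:E + H1semi2 r p))%E.
Proof.
have tail0_ge0 : (0 <= 1 + tail 0)%E by rewrite adde_ge0 ?tail_ge0.
have m_bound : measurable_fun setT (fun x => (p 0%N 0%N ^+ 2)%:E + energy p x)%E.
  exact: emeasurable_funD (measurable_energy p).
apply: (@le_trans _ _ (\int[mu]_x ((1 + tail 0) * ((p 0%N 0%N ^+ 2)%:E + energy p x)))%E).
  apply: ge0_le_integral => //.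
  - by move=> x _; rewrite lee_fin sqr_ge0.
  - exact: measurable_EFin_sqr (measurable_ptilde p m).
  - exact: measurable_funeM m_bound.
  - by move=> x _; exact: sqr_ptilde_le.
rewrite ge0_integralZl //; last by move=> x _; rewrite adde_ge0 ?lee_fin ?sqr_ge0 ?energy_ge0.
rewrite lee_wpmul2l // ge0_integralD //; last 3 first.
- by move=> x _; rewrite lee_fin sqr_ge0.
- by move=> x _; exact: energy_ge0.
- exact: measurable_energy.
by rewrite integral_cst_probability leeD2l ?integral_energy_le.
Qed.

Lemma integral_sqr_le_of_L2_cvg p (f : Z2 -> R) : inH1 r p -> measurable_fun setT f ->
  ((fun n => \int[mu]_x ((ptilde p n x - f x) ^+ 2)%:E) @ \oo --> 0%E)%E ->
  (\int[mu]_x (f x ^+ 2)%:E <=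
    2%:E * ((1 + tail 0) * ((p 0%N 0%N ^+ 2)%:E + H1semi2 r p)))%E.
Proof.
move=> hp mf cvg_f.
set K := ((1 + tail 0) * _)%E.
have K_fin : K \is a fin_num by rewrite fin_numM ?fin_numD ?fin_num_tail ?fin_num_H1semi2.
have cvg_bound : ((fun n => 2%:E * \int[mu]_x ((ptilde p n x - f x) ^+ 2)%:E + 2%:E * K)
    @ \oo --> 2%:E * 0 + 2%:E * K)%E.
  apply: cvgeD; first by rewrite fin_num_adde_defl // fin_numM.
    by apply: cvgeM; [exact: mule_def_fin | exact: cvg_cst | exact: cvg_f].
  exact: cvg_cst.
rewrite mule0 add0e in cvg_bound; rewrite -(cvg_lim _ cvg_bound) //.
apply: lime_ge; first by apply/cvg_ex; eexists; exact: cvg_bound.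
near=> n; apply: le_trans (integral_sqr_le_split mf (measurable_ptilde p n)) _.
by rewrite leeD2l // lee_wpmul2l // integral_sqr_ptilde_le.
Unshelve. all: by end_near.
Qed.

Lemma trace_exists p : inH1 r p -> exists f : Z2 -> R, L2limit mu p f.
Proof.
move=> hp; exists (ptilde_lim p).
have cvg_p := ptilde_L2_cvg hp.
split; first exact: measurable_ptilde_lim.
split=> //; apply/integrableP; split.
  exact: measurable_EFin_sqr (measurable_ptilde_lim p).
under eq_integral => x _ do rewrite gee0_abs ?lee_fin ?sqr_ge0 //.
apply: le_lt_trans (integral_sqr_le_of_L2_cvg hp (measurable_ptilde_lim p) cvg_p) _.
by rewrite ltey_eq !fin_numM ?fin_numD ?fin_num_tail ?fin_num_H1semi2.
Qed.

Lemma trace_bounded : exists C : R, 0 <= C /\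
  forall (p : vfun R) (f : Z2 -> R), inH1 r p -> L2limit mu p f ->
    (\int[mu]_x (f x ^+ 2)%:E <= (C ^+ 2 * H1norm2 r p)%:E)%E.
Proof.
have tail0_ge0 : 0 <= fine (tail 0) by rewrite fine_ge0 ?tail_ge0.
exists (Num.sqrt (2 * (1 + fine (tail 0)))); split; first exact: sqrtr_ge0.
move=> p f hp [mf [_ cvg_f]].
rewrite sqr_sqrtr ?mulr_ge0 ?addr_ge0 //.
have -> : (2 * (1 + fine (tail 0)) * H1norm2 r p)%:E =
    (2%:E * ((1 + tail 0) * ((p 0%N 0%N ^+ 2)%:E + H1semi2 r p)))%E.
  rewrite /H1norm2 -(fineK (fin_num_tail 0)) -(fineK (fin_num_H1semi2 hp)) -!EFinD -!EFinM.
  by congr (_%:E); ring.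
exact: integral_sqr_le_of_L2_cvg hp mf cvg_f.
Qed.

End Trace.

Theorem proposition2p1 (R : realType) (mu : probability Z2 R)
  (hmu : forall n a : nat, (a < 2 ^ n)%N -> mu (coset2 n a) = ((2%:R ^- n : R)%:E))
  (r : vfun R)
  (hr : forall n k : nat, (1 <= n)%N -> (k < 2 ^ n)%N -> 0 < r n k)
  (hsum : (\sum_(1 <= n <oo)
             ((2%:R ^- n * \big[Num.max/0]_(k < 2 ^ n) r n k)%:E) < +oo)%E) :
  (forall p : vfun R, inH1 r p -> exists f : Z2 -> R, L2limit mu p f)
  /\
  (forall (p q : vfun R) (a b : R) (fp fq : Z2 -> R),
      inH1 r p -> inH1 r q -> L2limit mu p fp -> L2limit mu q fq ->
      L2limit mu (fun n k => a * p n k + b * q n k) (fun x => a * fp x + b * fq x))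
  /\
  (exists C : R, 0 <= C /\
     forall (p : vfun R) (f : Z2 -> R), inH1 r p -> L2limit mu p f ->
       (\int[mu]_x (f x ^+ 2)%:E <= (C ^+ 2 * H1norm2 r p)%:E)%E).
Proof.
split; first exact: (@trace_exists _ _ hmu _ hr hsum).
split; last exact: (trace_bounded hmu hr hsum).
by move=> p q a b fp fq _ _; exact: L2limit_lincomb.
Qed.
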